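(* Let $\mathsf{Cof}$ be a class of maps in $\mathcal{E}$ satisfying axioms (C1)–(C4) and (C6). Then $\mathsf{Cof}$ is closed under composition (axiom (C5)) if and only if $\mathcal{E}\Vdash(\forall\varphi,\psi:\Omega)\,\mathrm{cof}\,\varphi\Rightarrow\big((\varphi\Rightarrow\mathrm{cof}\,\psi)\Rightarrow\mathrm{cof}(\varphi\wedge\psi)\big)$.
   Context: $\mathbb{C}$ is a small category, $\mathcal{E}=[\mathbb{C}^{op},\mathbf{Set}]$ with subobject classifier $\mathrm{true}:1\to\Omega$. Axioms on a class $\mathsf{Cof}$: (C1) its elements are monomorphisms; (C2) $0\to1$ is in it; (C3) $\mathrm{id}_1$ is in it; (C4) stable under pullback along all maps; (C5) closed under composition; (C6) the full subcategory of the category of arrows and pullback squares spanned by $\mathsf{Cof}$ has a terminal object $\top:1\rightarrowtail\Phi$, with $\Phi\rightarrowtail\Omega$ a subobject whose characteristic map is $\mathrm{cof}:\Omega\to\Omega$. Kripke–Joyal forcing: for $\rho:Y\to\Omega$ and $y:\mathbf{y}c\to Y$, $c\Vdash\rho(y)$ means $y$ factors through the subobject classified by $\rho$; $\mathcal{E}\Vdash\theta$ for a closed formula $\theta$ means $c\Vdash\theta$ for every $c\in\mathbb{C}$. Logical connectives and quantifiers over $\Omega$ are interpreted by the internal Heyting algebra structure. *)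

From Stdlib Require Import FunctionalExtensionality PropExtensionality ProofIrrelevance.

Record Cat := MkCat {
  Ob : Type;
  Hom : Ob -> Ob -> Type;
  idm : forall a, Hom a a;
  comp : forall a b c, Hom b c -> Hom a b -> Hom a c;
  comp_id_l : forall a b (f : Hom a b), comp a b b (idm b) f = f;
  comp_id_r : forall a b (f : Hom a b), comp a a b f (idm a) = f;
  comp_assoc : forall a b c d (f : Hom c d) (g : Hom b c) (h : Hom a b),
      comp a c d f (comp a b c g h) = comp a b d (comp b c d f g) h
}.
Arguments idm {_} _.
Arguments comp {_ _ _ _} _ _.
Arguments Hom {_} _ _.

Record Psh (C : Cat) := MkPsh {
  pob :> Ob C -> Type;
  act : forall a b, Hom b a -> pob a -> pob b;
  act_id : forall a x, act a a (idm a) x = x;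
  act_comp : forall a b c (f : Hom b a) (g : Hom c b) x,
      act a c (comp f g) x = act b c g (act a b f x)
}.
Arguments MkPsh {C}.
Arguments act {_} _ {_ _} _ _.

Record Nat {C : Cat} (F G : Psh C) := MkNat {
  nt :> forall a, F a -> G a;
  nt_nat : forall a b (f : Hom b a) x, nt b (act F f x) = act G f (nt a x)
}.
Arguments MkNat {C F G}.
Arguments nt {_ _ _} _ _ _.

Section Basics.
Context {C : Cat}.

Definition neq {F G : Psh C} (m n : Nat F G) : Prop :=
  forall a x, nt m a x = nt n a x.

Program Definition ncomp {F G H : Psh C} (n : Nat G H) (m : Nat F G) : Nat F H :=
  MkNat (fun a x => nt n a (nt m a x)) _.
Next Obligation. intros; simpl; now rewrite !nt_nat. Qed.

Program Definition nid (F : Psh C) : Nat F F := MkNat (fun a x => x) _.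

Program Definition one : Psh C := MkPsh (fun _ => unit) (fun _ _ _ x => x) _ _.
Program Definition zero : Psh C := MkPsh (fun _ => Empty_set) (fun _ _ _ x => x) _ _.

Program Definition to_one (F : Psh C) : Nat F one := MkNat (fun _ _ => tt) _.
Program Definition from_zero (F : Psh C) : Nat zero F :=
  MkNat (fun _ (x : Empty_set) => match x with end) _.
Next Obligation. intros; simpl in *; tauto. Qed.

Program Definition prodP (F G : Psh C) : Psh C :=
  MkPsh (fun a => (F a * G a)%type) (fun a b f p => (act F f (fst p), act G f (snd p))) _ _.
Next Obligation. intros; simpl; now rewrite !act_id. Qed.
Next Obligation. intros; simpl; now rewrite !act_comp. Qed.

Program Definition pair {X F G : Psh C} (m : Nat X F) (n : Nat X G) : Nat X (prodP F G) :=
  MkNat (fun a x => (nt m a x, nt n a x)) _.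
Next Obligation. intros; simpl; now rewrite !nt_nat. Qed.

Program Definition pr1 {F G : Psh C} : Nat (prodP F G) F := MkNat (fun a p => fst p) _.
Program Definition pr2 {F G : Psh C} : Nat (prodP F G) G := MkNat (fun a p => snd p) _.

Program Definition yon (c : Ob C) : Psh C :=
  MkPsh (fun d => Hom d c) (fun a b f g => comp g f) _ _.
Next Obligation. apply comp_id_r. Qed.
Next Obligation. apply comp_assoc. Qed.

Definition mono {F G : Psh C} (m : Nat F G) : Prop :=
  forall (X : Psh C) (u v : Nat X F), neq (ncomp m u) (ncomp m v) -> neq u v.

(* P --p1--> A
   |p2       |f
   v         v
   B  --g--> Z      is a pullback square *)
Definition IsPullback {A B Z : Psh C} (P : Psh C) (p1 : Nat P A) (p2 : Nat P B)
    (f : Nat A Z) (g : Nat B Z) : Prop :=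
  neq (ncomp f p1) (ncomp g p2) /\
  forall (X : Psh C) (q1 : Nat X A) (q2 : Nat X B),
    neq (ncomp f q1) (ncomp g q2) ->
    exists u : Nat X P,
      neq (ncomp p1 u) q1 /\ neq (ncomp p2 u) q2 /\
      forall u' : Nat X P, neq (ncomp p1 u') q1 -> neq (ncomp p2 u') q2 -> neq u' u.

Record sieve (c : Ob C) := MkSieve {
  sv :> forall d, Hom d c -> Prop;
  sv_closed : forall d e (f : Hom d c) (g : Hom e d), sv d f -> sv e (comp f g)
}.
Arguments MkSieve {c}.
Arguments sv {c} _ d _.

Lemma sieve_ext {c} (S T : sieve c) :
  (forall d f, sv S d f <-> sv T d f) -> S = T.
Proof.
  destruct S as [S HS], T as [T HT]; simpl; intros H.
  assert (E : S = T).
  { apply functional_extensionality_dep; intro d.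
    apply functional_extensionality; intro f.
    apply propositional_extensionality; apply H. }
  subst T. f_equal. apply proof_irrelevance.
Qed.

Program Definition pull {a b} (f : Hom b a) (S : sieve a) : sieve b :=
  MkSieve (fun d g => sv S d (comp f g)) _.
Next Obligation. rewrite comp_assoc. now apply sv_closed. Qed.

Program Definition Omega : Psh C := MkPsh sieve (fun a b f S => pull f S) _ _.
Next Obligation. apply sieve_ext; intros; simpl. now rewrite comp_id_l. Qed.
Next Obligation. apply sieve_ext; intros; simpl. now rewrite comp_assoc. Qed.

Program Definition maxsieve (c : Ob C) : sieve c := MkSieve (fun _ _ => True) _.

Program Definition trueO : Nat one Omega := MkNat (fun a _ => maxsieve a) _.
Next Obligation. apply sieve_ext; intros; simpl; tauto. Qed.

Program Definition andS {c} (S T : sieve c) : sieve c :=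
  MkSieve (fun d f => sv S d f /\ sv T d f) _.
Next Obligation. split; apply sv_closed; assumption. Qed.

Program Definition impS {c} (S T : sieve c) : sieve c :=
  MkSieve (fun d f => forall e (g : Hom e d), sv S e (comp f g) -> sv T e (comp f g)) _.
Next Obligation.
  intros. rewrite <- comp_assoc in H0 |- *. now apply H.
Qed.

Program Definition andO : Nat (prodP Omega Omega) Omega :=
  MkNat (fun a p => andS (fst p) (snd p)) _.
Next Obligation. apply sieve_ext; intros; simpl; tauto. Qed.

Program Definition impO : Nat (prodP Omega Omega) Omega :=
  MkNat (fun a p => impS (fst p) (snd p)) _.
Next Obligation. intros. apply sieve_ext; intros; simpl. now setoid_rewrite comp_assoc. Qed.

(* universal quantification over Omega x Omega of a predicate
   rho : Omega x Omega -> Omega, giving a closed formula 1 -> Omega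
   (right adjoint to pulling back along Omega x Omega -> 1) *)
Program Definition forallS (rho : Nat (prodP Omega Omega) Omega) (c : Ob C) : sieve c :=
  MkSieve (fun d f => forall e (g : Hom e d) (p : sieve e * sieve e),
                        sv (nt rho e p) e (idm e)) _.
Next Obligation. intros. apply (H e0 (comp g g0)). Qed.

Program Definition forallO (rho : Nat (prodP Omega Omega) Omega) : Nat one Omega :=
  MkNat (fun c _ => forallS rho c) _.
Next Obligation. intros. apply sieve_ext; intros; simpl; split; intros; auto. Qed.

(* c ||- rho(y), for rho : Y -> Omega and y : yc -> Y: y factors through the
   subobject classified by rho (i.e. through the pullback of true along rho). *)
Definition forces (c : Ob C) {Y : Psh C} (rho : Nat Y Omega) (y : Nat (yon c) Y) : Prop :=
  forall (S : Psh C) (m : Nat S Y) (t : Nat S one),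
    IsPullback S m t rho trueO -> exists h : Nat (yon c) S, neq (ncomp m h) y.

Definition Eforces (theta : Nat one Omega) : Prop :=
  forall c : Ob C, forces c theta (to_one (yon c)).

(* the closed formula
   (forall phi psi : Omega) cof phi => ((phi => cof psi) => cof (phi /\ psi)) *)
Definition theta_body (cof : Nat Omega Omega) : Nat (prodP Omega Omega) Omega :=
  ncomp impO
    (pair (ncomp cof pr1)
          (ncomp impO
             (pair (ncomp impO (pair pr1 (ncomp cof pr2)))
                   (ncomp cof andO)))).

Definition theta (cof : Nat Omega Omega) : Nat one Omega := forallO (theta_body cof).

Definition MapClass := forall A B : Psh C, Nat A B -> Prop.

Definition C1 (Cof : MapClass) : Prop := forall A B (m : Nat A B), Cof A B m -> mono m.
Definition C2 (Cof : MapClass) : Prop := Cof zero one (from_zero one).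
Definition C3 (Cof : MapClass) : Prop := Cof one one (nid one).
Definition C4 (Cof : MapClass) : Prop :=
  forall A B (m : Nat A B) B' (f : Nat B' B) A' (f' : Nat A' A) (m' : Nat A' B'),
    Cof A B m -> IsPullback A' f' m' m f -> Cof A' B' m'.
Definition C5 (Cof : MapClass) : Prop :=
  forall A B D (m : Nat A B) (n : Nat B D), Cof A B m -> Cof B D n -> Cof A D (ncomp n m).

(* (C6): top : 1 >-> Phi is a terminal object of the full subcategory of the
   category of arrows and pullback squares spanned by Cof; iota : Phi >-> Omega
   is the subobject of Omega corresponding to Phi (the characteristic map of top),
   and cof : Omega -> Omega is the characteristic map of iota. *)
Definition C6 (Cof : MapClass) (Phi : Psh C) (top : Nat one Phi)
    (iota : Nat Phi Omega) (cof : Nat Omega Omega) : Prop :=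
  Cof one Phi top /\
  (forall A B (m : Nat A B), Cof A B m ->
     exists (a : Nat A one) (b : Nat B Phi),
       IsPullback A a m top b /\
       forall (a' : Nat A one) (b' : Nat B Phi),
         IsPullback A a' m top b' -> neq a' a /\ neq b' b) /\
  mono iota /\
  IsPullback one top (to_one one) iota trueO /\
  IsPullback Phi iota (to_one Phi) cof trueO.

End Basics.

From Stdlib Require Import ProofIrrelevance ClassicalEpsilon.

(* By (C6), a map is in Cof exactly when it is a mono all of whose characteristic sieves are
   cofibrant (forced by cof): pulling the generic cofibration top back along a classifying map
   gives one inclusion, (C4) the other ([Cof_iff]).  Read through this description, the internal
   formula says that cofibrant sieves are closed under dependent conjunction.  Given (C5), the
   inclusion of phi /\ psi into the representable is the composite of the cofibrations
   phi /\ psi >-> phi >-> y(e).  Conversely, for cofibrations m and n the characteristic sieve of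
   n m at d is that of n at d conjoined with itself, and wherever n b = d.g its restriction along
   g is the characteristic sieve of m at b. *)

#[local] Arguments sv {C c} _ d _.

Section Presheaves.
Context {C : Cat}.

Lemma sieve_full {c : Ob C} (S : sieve c) :
  sv S c (idm c) -> forall d (f : Hom d c), sv S d f.
Proof. intros H d f. rewrite <- (comp_id_l _ _ _ f). now apply sv_closed. Qed.

Lemma sieve_full_iff {c : Ob C} (S : sieve c) : sv S c (idm c) <-> S = maxsieve c.
Proof.
  split.
  - intros H. apply sieve_ext; intros d f; simpl; split; auto. intros _. now apply sieve_full.
  - intros ->. exact I.
Qed.

Lemma pull_id {c : Ob C} (S : sieve c) : pull (idm c) S = S.
Proof. apply sieve_ext; intros d f; simpl. now rewrite comp_id_l. Qed.

Lemma pull_comp {a b d : Ob C} (f : Hom b a) (g : Hom d b) (S : sieve a) :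
  pull g (pull f S) = pull (comp f g) S.
Proof. apply sieve_ext; intros e h; simpl. now rewrite comp_assoc. Qed.

Lemma pull_andS {a b : Ob C} (f : Hom b a) (S T : sieve a) :
  pull f (andS S T) = andS (pull f S) (pull f T).
Proof. apply sieve_ext; intros e h; simpl. tauto. Qed.

Lemma pull_andS_mem {a b : Ob C} (f : Hom b a) (S T : sieve a) :
  sv S b f -> pull f (andS S T) = pull f T.
Proof.
  intros Hf. apply sieve_ext; intros e g; simpl.
  split; [tauto|]. intros HT. split; [now apply sv_closed | exact HT].
Qed.

Definition holds {F : Psh C} (rho : Nat F Omega) {e : Ob C} (x : F e) : Prop :=
  sv (nt rho e x) e (idm e).

Lemma sv_nat_iff_holds {F : Psh C} (rho : Nat F Omega) {e d : Ob C} (x : F e) (f : Hom d e) :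
  sv (nt rho e x) d f <-> holds rho (act F f x).
Proof. unfold holds. rewrite nt_nat; simpl. now rewrite comp_id_r. Qed.

Lemma holds_act {F : Psh C} (rho : Nat F Omega) {e d : Ob C} (x : F e) (f : Hom d e) :
  holds rho x -> holds rho (act F f x).
Proof. intros H. apply (sv_nat_iff_holds rho x f), sieve_full, H. Qed.

Definition injective_nat {F G : Psh C} (m : Nat F G) : Prop :=
  forall a (x y : F a), nt m a x = nt m a y -> x = y.

Program Definition yon_elt {F : Psh C} {e : Ob C} (x : F e) : Nat (yon e) F :=
  MkNat (fun d f => act F f x) _.
Next Obligation. intros; simpl. apply act_comp. Qed.

Lemma mono_injective_nat {F G : Psh C} (m : Nat F G) : mono m -> injective_nat m.
Proof.
  intros Hm e x y H.
  assert (Hxy : neq (yon_elt x) (yon_elt y)).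
  { apply Hm. intros d f; simpl. now rewrite !nt_nat, H. }
  specialize (Hxy e (idm e)); simpl in Hxy. now rewrite !act_id in Hxy.
Qed.

Lemma lift_along_injective {X A B : Psh C} (m : Nat A B) (q : Nat X B) :
  injective_nat m -> (forall a (x : X a), exists y, nt m a y = nt q a x) ->
  exists u : Nat X A, neq (ncomp m u) q.
Proof.
  intros Hm Hq.
  assert (Hy : forall a (x : X a), {y : A a | nt m a y = nt q a x})
    by (intros; apply constructive_indefinite_description, Hq).
  assert (Hnat : forall a b (f : Hom b a) x,
            proj1_sig (Hy b (act X f x)) = act A f (proj1_sig (Hy a x))).
  { intros. apply Hm. now rewrite nt_nat, !(proj2_sig (Hy _ _)), nt_nat. }
  exists (MkNat (fun a x => proj1_sig (Hy a x)) Hnat).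
  intros a x. exact (proj2_sig (Hy a x)).
Qed.

Lemma IsPullback_sym {P A B Z : Psh C} (p1 : Nat P A) (p2 : Nat P B)
    (f : Nat A Z) (g : Nat B Z) :
  IsPullback P p1 p2 f g -> IsPullback P p2 p1 g f.
Proof.
  intros [Hc Hu]. split.
  - intros a x. symmetry. apply Hc.
  - intros X q1 q2 Hq. destruct (Hu X q2 q1) as [u [H1 [H2 H3]]].
    + intros a x. symmetry. apply Hq.
    + exists u. split; [exact H2 | split; [exact H1 |]].
      intros u' H1' H2'. now apply H3.
Qed.

Lemma pullback_point_fiber {A B P : Psh C} (m : Nat A B) (u : Nat A one)
    (h : Nat B P) (t : Nat one P) :
  IsPullback A m u h t ->
  forall a (b : B a), nt h a b = nt t a tt <-> exists y, nt m a y = b.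
Proof.
  intros [Hc Hu] a b. split.
  - intros Hb. destruct (Hu (yon a) (yon_elt b) (to_one _)) as [v [Hv _]].
    + intros d f; simpl. rewrite nt_nat, Hb, <- nt_nat. reflexivity.
    + exists (nt v a (idm a)). specialize (Hv a (idm a)); simpl in Hv.
      now rewrite Hv, act_id.
  - intros [y <-]. specialize (Hc a y); simpl in Hc. rewrite Hc. now destruct (nt u a y).
Qed.

Lemma pullback_point_of_injective {A B P : Psh C} (m : Nat A B) (h : Nat B P)
    (t : Nat one P) :
  injective_nat m ->
  (forall a (b : B a), nt h a b = nt t a tt <-> exists y, nt m a y = b) ->
  IsPullback A m (to_one A) h t.
Proof.
  intros Hm Hfib. split.
  - intros a y; simpl. apply Hfib. now exists y.
  - intros X q1 q2 Hq.
    destruct (lift_along_injective m q1 Hm) as [v Hv].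
    { intros a x. apply Hfib. specialize (Hq a x); simpl in Hq. rewrite Hq.
      now destruct (nt q2 a x). }
    exists v. split; [exact Hv | split].
    + intros a x; simpl. now destruct (nt q2 a x).
    + intros v' Hv' _ a x. apply Hm. exact (eq_trans (Hv' a x) (eq_sym (Hv a x))).
Qed.

Program Definition extent (th : Nat (@one C) Omega) : Psh C :=
  MkPsh (fun a => @holds one th a tt) (fun a b f H => holds_act th tt f H) _ _.
Next Obligation. intros; apply proof_irrelevance. Qed.
Next Obligation. intros; apply proof_irrelevance. Qed.

Lemma forces_closed_iff (th : Nat (@one C) Omega) (c : Ob C) :
  forces c th (to_one (yon c)) <-> holds th (tt : @one C c).
Proof.
  split.
  - intros Hf.
    (* [extent th] is the pullback of [trueO] along [th], so forcing yields a section of it. *)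
    assert (Hpb : IsPullback (extent th) (to_one _) (to_one _) th trueO).
    { apply pullback_point_of_injective.
      - intros a x y _. apply (proof_irrelevance (holds th (tt : @one C a))).
      - intros a []; simpl. rewrite <- sieve_full_iff.
        split; [intros H; now exists H | now intros [H _]]. }
    destruct (Hf _ _ _ Hpb) as [h _]. exact (nt h c (idm c)).
  - intros H S m t [_ Hu].
    destruct (Hu (yon c) (to_one _) (to_one _)) as [u [Hu1 _]].
    + intros a f; simpl. apply sieve_full_iff, (holds_act th tt f H).
    + now exists u.
Qed.

Lemma Eforces_forallO (rho : Nat (prodP (@Omega C) Omega) Omega) :
  Eforces (forallO rho) <-> forall e (p : sieve e * sieve e), holds rho p.
Proof.
  unfold Eforces. setoid_rewrite forces_closed_iff. split.
  - intros H e p. exact (H e e (idm e) p).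
  - intros H c e g p. apply H.
Qed.

Definition char_sieve {A B : Psh C} (m : Nat A B) {e : Ob C} (b : B e) : sieve e.
Proof.
  refine (@MkSieve C e (fun d f => exists y, nt m d y = act B f b) _).
  intros d d' f g [y Hy]. exists (act A g y). now rewrite nt_nat, Hy, act_comp.
Defined.

Lemma pull_char_sieve {A B : Psh C} (m : Nat A B) {e d : Ob C} (f : Hom d e) (b : B e) :
  pull f (char_sieve m b) = char_sieve m (act B f b).
Proof. apply sieve_ext; intros d' g; simpl. now rewrite act_comp. Qed.

Definition char_map {A B : Psh C} (m : Nat A B) : Nat B Omega :=
  MkNat (G := Omega) (fun e b => char_sieve m b) (fun e d f b => eq_sym (pull_char_sieve m f b)).

Lemma char_sieve_neq {A B : Psh C} (m m' : Nat A B) {e : Ob C} (b : B e) :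
  neq m m' -> char_sieve m b = char_sieve m' b.
Proof.
  intros H. apply sieve_ext; intros d f; simpl.
  split; intros [y Hy]; exists y; [rewrite <- H | rewrite H]; exact Hy.
Qed.

Lemma char_sieve_comp_le {A B D : Psh C} (m : Nat A B) (n : Nat B D) {e : Ob C} (x : D e) :
  andS (char_sieve n x) (char_sieve (ncomp n m) x) = char_sieve (ncomp n m) x.
Proof.
  apply sieve_ext; intros d f; simpl. split; [tauto|].
  intros [y Hy]. split; [now exists (nt m d y) | now exists y].
Qed.

Lemma char_sieve_comp_at {A B D : Psh C} (m : Nat A B) (n : Nat B D) {e : Ob C}
    (b : B e) (x : D e) :
  injective_nat n -> nt n e b = x -> char_sieve (ncomp n m) x = char_sieve m b.
Proof.
  intros Hn <-. apply sieve_ext; intros d f; simpl. rewrite <- nt_nat. split.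
  - intros [y Hy]. exists y. now apply Hn.
  - intros [y Hy]. exists y. now rewrite Hy.
Qed.

Program Definition sieve_psh {e : Ob C} (S : sieve e) : Psh C :=
  MkPsh (fun d => {g : Hom d e | sv S d g})
        (fun a b f x => exist _ (comp (proj1_sig x) f) (sv_closed _ _ _ _ _ _ (proj2_sig x)))
        _ _.
Next Obligation.
  intros; apply eq_sig_hprop; [intros; apply proof_irrelevance|]. apply comp_id_r.
Qed.
Next Obligation.
  intros; apply eq_sig_hprop; [intros; apply proof_irrelevance|]. apply comp_assoc.
Qed.

Program Definition sieve_incl {e : Ob C} (S : sieve e) : Nat (sieve_psh S) (yon e) :=
  MkNat (fun d x => proj1_sig x) _.

Program Definition sieve_le_incl {e : Ob C} (S T : sieve e)
    (HST : forall d g, sv S d g -> sv T d g) : Nat (sieve_psh S) (sieve_psh T) :=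
  MkNat (fun d x => exist _ (proj1_sig x) (HST _ _ (proj2_sig x))) _.
Next Obligation.
  intros; apply eq_sig_hprop; [intros; apply proof_irrelevance|]. reflexivity.
Qed.

Lemma sieve_incl_injective {e : Ob C} (S : sieve e) : injective_nat (sieve_incl S).
Proof. intros d x y. apply eq_sig_hprop. intros; apply proof_irrelevance. Qed.

Lemma sieve_le_incl_injective {e : Ob C} (S T : sieve e) HST :
  injective_nat (sieve_le_incl S T HST).
Proof.
  intros d x y Hxy. apply eq_sig_hprop; [intros; apply proof_irrelevance|].
  exact (f_equal (@proj1_sig _ _) Hxy).
Qed.

Lemma char_sieve_incl {e d : Ob C} (S : sieve e) (g : Hom d e) :
  char_sieve (sieve_incl S) g = pull g S.
Proof.
  apply sieve_ext; intros d' f; simpl. split.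
  - now intros [[h Hh] <-].
  - intros Hf. now exists (exist _ _ Hf).
Qed.

Lemma char_sieve_le_incl {e d : Ob C} (S T : sieve e) HST (x : sieve_psh T d) :
  char_sieve (sieve_le_incl S T HST) x = pull (proj1_sig x) S.
Proof.
  apply sieve_ext; intros d' f; simpl. split.
  - intros [[h Hh] Hx]. apply (f_equal (@proj1_sig _ _)) in Hx; simpl in Hx. now subst.
  - intros Hf. exists (exist _ _ Hf).
    apply eq_sig_hprop; [intros; apply proof_irrelevance | reflexivity].
Qed.

Lemma sieve_incl_comp {e : Ob C} (S T : sieve e) HST :
  neq (ncomp (sieve_incl T) (sieve_le_incl S T HST)) (sieve_incl S).
Proof. now intros d x. Qed.

End Presheaves.

Section Cofibrant.
Context {C : Cat} (cof : Nat (@Omega C) Omega).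

Definition cofibrant_and_closed : Prop :=
  forall e (phi psi : sieve e), holds cof phi ->
    (forall d (g : Hom d e), sv phi d g -> holds cof (pull g psi)) ->
    holds cof (andS phi psi).

Lemma holds_theta_body_iff :
  (forall e (p : sieve e * sieve e), holds (theta_body cof) p) <-> cofibrant_and_closed.
Proof.
  unfold holds; simpl. split.
  - intros H e phi psi Hphi Hpsi.
    specialize (H e (phi, psi) e (idm e)); simpl in H. rewrite comp_id_l in H.
    specialize (H Hphi e (idm e)). rewrite comp_id_l in H.
    apply H. intros d g Hg. rewrite comp_id_l in *.
    now apply sv_nat_iff_holds, Hpsi.
  - intros H e [phi psi] e0 g Hphi e1 g0 Hpsi; simpl in *. rewrite !comp_id_l in *.
    apply (sv_nat_iff_holds cof (andS phi psi)); simpl. rewrite pull_andS. apply H.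
    + apply (sv_nat_iff_holds cof phi (comp g g0)). now apply sv_closed.
    + intros d l Hl. rewrite pull_comp. apply (sv_nat_iff_holds cof psi), Hpsi, Hl.
Qed.

End Cofibrant.

Section Classifier.
Context {C : Cat} (Cof : @MapClass C) (Phi : Psh C) (top : Nat one Phi)
  (iota : Nat Phi Omega) (cof : Nat (@Omega C) Omega).
Hypothesis HC6 : C6 Cof Phi top iota cof.

Lemma iota_injective : injective_nat iota.
Proof. apply mono_injective_nat, HC6. Qed.

Lemma holds_cof_iff_in_Phi {e : Ob C} (phi : sieve e) :
  holds cof phi <-> exists x : Phi e, nt iota e x = phi.
Proof.
  destruct HC6 as (_ & _ & _ & _ & Hcof).
  unfold holds. rewrite sieve_full_iff. exact (pullback_point_fiber _ _ _ _ Hcof e phi).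
Qed.

Lemma sv_iota_iff_top {e d : Ob C} (y : Phi e) (f : Hom d e) :
  sv (nt iota e y) d f <-> act Phi f y = nt top d tt.
Proof.
  destruct HC6 as (_ & _ & _ & Htop & _).
  rewrite sv_nat_iff_holds. unfold holds. rewrite sieve_full_iff.
  rewrite (pullback_point_fiber _ _ _ _ Htop d (act Phi f y)).
  split; [intros [[] <-] | intros ->; exists tt]; reflexivity.
Qed.

Lemma Cof_holds_char_sieve {A B : Psh C} (m : Nat A B) :
  Cof A B m -> forall e (b : B e), holds cof (char_sieve m b).
Proof.
  intros Hm e b. destruct HC6 as (_ & HPhi & _).
  destruct (HPhi A B m Hm) as (u & h & Hpb & _).
  apply IsPullback_sym in Hpb.
  apply holds_cof_iff_in_Phi. exists (nt h e b).
  apply sieve_ext; intros d f. rewrite sv_iota_iff_top, <- nt_nat.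
  exact (pullback_point_fiber _ _ _ _ Hpb d (act B f b)).
Qed.

Hypothesis HC4 : C4 Cof.

Lemma Cof_of_injective_nat {A B : Psh C} (m : Nat A B) :
  injective_nat m -> (forall e (b : B e), holds cof (char_sieve m b)) -> Cof A B m.
Proof.
  intros Hm Hchar.
  destruct (lift_along_injective iota (char_map m) iota_injective) as [h Hh].
  { intros e b. apply holds_cof_iff_in_Phi, Hchar. }
  apply (HC4 one Phi top B h A (to_one A) m (proj1 HC6)).
  apply IsPullback_sym, pullback_point_of_injective; [exact Hm|].
  intros a b. pose proof (Hh a b) as Hhb; simpl in Hhb.
  rewrite <- (act_id _ Phi a (nt h a b)), <- sv_iota_iff_top, Hhb; simpl.
  now rewrite act_id.
Qed.

Lemma cofibrant_and_closed_of_C5 : C5 Cof -> cofibrant_and_closed cof.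
Proof.
  intros HC5 e phi psi Hphi Hpsi.
  assert (Hle : forall d g, sv (andS phi psi) d g -> sv phi d g) by (now intros d g []).
  assert (Hincl : Cof _ _ (sieve_incl phi)).
  { apply Cof_of_injective_nat; [apply sieve_incl_injective|].
    intros d g. rewrite char_sieve_incl. exact (holds_act cof phi g Hphi). }
  assert (Hle_incl : Cof _ _ (sieve_le_incl _ _ Hle)).
  { apply Cof_of_injective_nat; [apply sieve_le_incl_injective|].
    intros d [g Hg]. rewrite char_sieve_le_incl; simpl. rewrite pull_andS_mem by exact Hg.
    now apply Hpsi. }
  pose proof (Cof_holds_char_sieve _ (HC5 _ _ _ _ _ Hle_incl Hincl) e (idm e)) as Hcomp.
  now rewrite (char_sieve_neq _ _ _ (sieve_incl_comp _ _ Hle)), char_sieve_incl, pull_id in Hcomp.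
Qed.

Hypothesis HC1 : C1 Cof.

Lemma Cof_iff {A B : Psh C} (m : Nat A B) :
  Cof A B m <-> injective_nat m /\ forall e (b : B e), holds cof (char_sieve m b).
Proof.
  split.
  - intros Hm. split; [apply mono_injective_nat, HC1, Hm | now apply Cof_holds_char_sieve].
  - intros [Hinj Hchar]. now apply Cof_of_injective_nat.
Qed.

Lemma C5_of_cofibrant_and_closed : cofibrant_and_closed cof -> C5 Cof.
Proof.
  intros Hclosed A B D m n Hm Hn.
  apply Cof_iff in Hm as [Hm_inj Hm_char].
  apply Cof_iff in Hn as [Hn_inj Hn_char].
  apply Cof_iff. split.
  - intros e x y Hxy. exact (Hm_inj e x y (Hn_inj e _ _ Hxy)).
  - intros e x. rewrite <- char_sieve_comp_le. apply Hclosed; [apply Hn_char|].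
    intros d g [b Hb]. rewrite pull_char_sieve, (char_sieve_comp_at m n b _ Hn_inj Hb).
    apply Hm_char.
Qed.

End Classifier.

Theorem mainTheorem10 (C : Cat) (Cof : @MapClass C) (Phi : Psh C)
    (top : Nat one Phi) (iota : Nat Phi Omega) (cof : Nat Omega Omega) :
  C1 Cof -> C2 Cof -> C3 Cof -> C4 Cof -> C6 Cof Phi top iota cof ->
  (C5 Cof <-> Eforces (theta cof)).
Proof.
  intros HC1 _ _ HC4 HC6.
  unfold theta. rewrite Eforces_forallO, holds_theta_body_iff. split.
  - exact (cofibrant_and_closed_of_C5 Cof Phi top iota cof HC6 HC4).
  - exact (C5_of_cofibrant_and_closed Cof Phi top iota cof HC6 HC4 HC1).
Qed.
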